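(* Let $V$ be a set of size $n$ and $P(V)$ its power set. Let $f_1,f_2,g:P(V)\to[0,+\infty)$ with $g(\emptyset)=g(V)=0$ and $g(S)>0$ for all $\emptyset\ne S\subsetneq V$. Define $f(S)=\min\{f_1(S),f_2(S)\}$ for $S\subseteq V$, let $F^L,F_1^L,F_2^L,G^L$ be the Lovász extensions of $f,f_1,f_2,g$ respectively, and set $\tilde F^L=\min\{F_1^L,F_2^L\}$. Then $F^L(\mathbf{1}_S)=\tilde F^L(\mathbf{1}_S)$ for every $S\subseteq V$. If moreover $f_1(V)=f_2(V)=0$, then $$\min_{\emptyset\ne S\subsetneq V}\frac{f(S)}{g(S)}=\inf_{\mathbf{x}\in\mathbb{R}^n\setminus\{t\mathbf{1}:\,t\in\mathbb{R}\}}\frac{F^L(\mathbf{x})}{G^L(\mathbf{x})}=\inf_{\mathbf{x}\in\mathbb{R}^n\setminus\{t\mathbf{1}:\,t\in\mathbb{R}\}}\frac{\tilde F^L(\mathbf{x})}{G^L(\mathbf{x})}.$$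
   Context: Identify $V$ with $\{1,\dots,n\}$; $\mathbf{1}_S\in\mathbb{R}^n$ is the indicator vector of $S$ and $\mathbf{1}$ the all-ones vector. For $\mathbf{x}\in\mathbb{R}^n$, let $\sigma:\{0,1,\dots,n\}\to\{0,1,\dots,n\}$ be a bijection with $\sigma(0)=0$ and $x_{\sigma(1)}\le\cdots\le x_{\sigma(n)}$, where $x_0:=0$. Set $V_0=V$ and $V_{\sigma(i)}=\{j\in V:x_j>x_{\sigma(i)}\}$ for $i=1,\dots,n-1$. The Lovász extension of $h:P(V)\to[0,+\infty)$ is $H^L(\mathbf{x})=\sum_{i=0}^{n-1}(x_{\sigma(i+1)}-x_{\sigma(i)})\,h(V_{\sigma(i)})$. *)

From HB Require Import structures.
From mathcomp Require Import all_boot all_order all_algebra.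
From mathcomp Require Import boolp classical_sets reals.
Set Implicit Arguments. Unset Strict Implicit. Unset Printing Implicit Defensive.
Import Order.TTheory GRing.Theory Num.Theory.
Local Open Scope ring_scope.

(* V = 'I_n, vectors x in R^n are functions 'I_n -> R. *)

(* Sorted values x_{sigma(1)} <= ... <= x_{sigma(n)} (the sorted sequence of
   the coordinates of x; index i of this seq is x_{sigma(i+1)}). *)
Definition sorted_vals (R : realType) (n : nat) (x : 'I_n -> R) : seq R :=
  sort <=%R [seq x i | i <- enum 'I_n].

(* Lovász extension, exactly as in the context:
   H^L(x) = sum_{i=0}^{n-1} (x_{sigma(i+1)} - x_{sigma(i)}) h(V_{sigma(i)})
   with x_{sigma(0)} = x_0 = 0, V_{sigma(0)} = V_0 = V and
   V_{sigma(i)} = {j | x_j > x_{sigma(i)}} for i >= 1. *)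
Definition lovasz (R : realType) (n : nat) (h : {set 'I_n} -> R)
    (x : 'I_n -> R) : R :=
  let s := sorted_vals x in
  \sum_(i < n)
    (s`_i - (if i == 0%N :> nat then 0 else s`_(i.-1))) *
    h (if i == 0%N :> nat then [set: 'I_n]
       else [set j | s`_(i.-1) < x j]).

Definition indic (R : realType) (n : nat) (S : {set 'I_n}) : 'I_n -> R :=
  fun i => if i \in S then 1 else 0.

Definition nonconst (R : realType) (n : nat) (x : 'I_n -> R) : Prop :=
  ~ (exists t : R, forall i, x i = t).

From HB Require Import structures.
From mathcomp Require Import all_boot all_order all_algebra.
From mathcomp Require Import boolp classical_sets reals.
From mathcomp Require Import zify.
Set Implicit Arguments.
Unset Strict Implicit.
Unset Printing Implicit Defensive.
Import Order.TTheory GRing.Theory Num.Theory.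
Local Open Scope ring_scope.

(* The Lovász extension of h at x is a combination sum_i c_i h(V_i) of the values
   of h on the superlevel sets V_i of x.  Every coefficient c_i with i > 0 is
   nonnegative and vanishes unless V_i is a proper nonempty subset, and the remaining
   term c_0 h(V) disappears when h(V) = 0.  At an indicator 1_S the only nonzero
   coefficient sits at the level set S, so H^L(1_S) = h(S) for S nonempty, which
   gives the first claim.  For the second, let r = f(S)/g(S) be the least ratio over
   proper nonempty S: then r g <= f <= f_k on such sets, and all of them vanish at V,
   so r G^L <= F^L <= min(F_1^L, F_2^L) everywhere, while G^L > 0 off the constant
   vectors.  Since the ratio r is attained at 1_S, it is the infimum of both
   quotients. *)

Lemma filter_enum_set (T : finType) (A : {set T}) : [seq j <- enum T | j \in A] = enum A.
Proof. by rewrite enumT /enum_mem; apply: eq_filter. Qed.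

Lemma map_enum_const (T : finType) (U : eqType) (A : {set T}) (F : T -> U) (c : U) :
  {in A, forall j, F j = c} -> [seq F j | j <- enum A] = nseq #|A| c.
Proof.
move=> FA; rewrite cardE -(size_map F); apply/all_pred1P/allP => _ /mapP[j jA ->].
by rewrite /= FA // -mem_enum.
Qed.

Lemma pairwise_nseq (T : Type) (r : rel T) k (a : T) : r a a -> pairwise r (nseq k a).
Proof. by move=> raa; elim: k => //= k ->; rewrite all_nseq raa orbT. Qed.

Section LovaszExtension.
Variables (R : realType) (n : nat).
Implicit Types (x : 'I_n -> R) (h : {set 'I_n} -> R) (S : {set 'I_n}).

Definition lovasz_coef x (i : 'I_n) : R :=
  (sorted_vals x)`_i - (if i == 0%N :> nat then 0 else (sorted_vals x)`_i.-1).

Definition lovasz_level x (i : 'I_n) : {set 'I_n} :=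
  if i == 0%N :> nat then [set: 'I_n] else [set j | (sorted_vals x)`_i.-1 < x j].

Lemma lovaszE h x :
  lovasz h x = \sum_(i < n) lovasz_coef x i * h (lovasz_level x i).
Proof. by []. Qed.

Lemma lovaszZ (c : R) h x : lovasz (fun S => c * h S) x = c * lovasz h x.
Proof. by rewrite !lovaszE mulr_sumr; apply: eq_bigr => i _; rewrite mulrCA. Qed.

Lemma size_sorted_vals x : size (sorted_vals x) = n.
Proof. by rewrite size_sort size_map size_enum_ord. Qed.

Lemma sorted_vals_sorted x : sorted <=%R (sorted_vals x).
Proof. rewrite /sorted_vals; exact: (sort_sorted (@le_total _ R)). Qed.

Lemma sorted_vals_le x (i j : nat) :
  (i <= j)%N -> (j < n)%N -> (sorted_vals x)`_i <= (sorted_vals x)`_j.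
Proof.
move=> le_ij lt_jn; apply: (sorted_leq_nth le_trans lexx 0 (sorted_vals_sorted x)).
- by rewrite inE size_sorted_vals (leq_ltn_trans le_ij).
- by rewrite inE size_sorted_vals.
- exact: le_ij.
Qed.

Lemma mem_sorted_vals x (a : R) :
  (a \in sorted_vals x) = (a \in [seq x j | j <- enum 'I_n]).
Proof. exact: mem_sort. Qed.

Lemma sorted_vals_nth_val x {i : nat} : (i < n)%N -> exists j, x j = (sorted_vals x)`_i.
Proof.
move=> lt_in; have : (sorted_vals x)`_i \in sorted_vals x.
  by rewrite mem_nth ?size_sorted_vals.
by rewrite mem_sorted_vals => /mapP[j _ ->]; exists j.
Qed.

Lemma val_sorted_vals_nth x j : exists2 i, (i < n)%N & (sorted_vals x)`_i = x j.
Proof.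
have xj : x j \in sorted_vals x by rewrite mem_sorted_vals map_f ?mem_enum.
exists (index (x j) (sorted_vals x)); last exact: nth_index.
by rewrite -{2}(size_sorted_vals x) index_mem.
Qed.

Lemma lovasz_coef_ge0 x (i : 'I_n) : i != 0%N :> nat -> 0 <= lovasz_coef x i.
Proof.
by move=> /negbTE i0; rewrite /lovasz_coef i0 subr_ge0 sorted_vals_le ?leq_pred.
Qed.

Lemma lovasz_level_proper {x} {i : 'I_n} : 0 < lovasz_coef x i -> i != 0%N :> nat ->
  lovasz_level x i != finset.set0 /\ lovasz_level x i != [set: 'I_n].
Proof.
rewrite /lovasz_coef /lovasz_level => + /negbTE i0; rewrite i0 subr_gt0 => lt_prev.
have [j1 xj1] := sorted_vals_nth_val x (ltn_ord i).
have [j2 xj2] := sorted_vals_nth_val x (leq_ltn_trans (leq_pred i) (ltn_ord i)).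
split; first by apply/set0Pn; exists j1; rewrite inE xj1.
by apply/negP => /eqP/setP/(_ j2); rewrite !inE xj2 ltxx.
Qed.

Lemma exists_lovasz_coef_gt0 x :
  nonconst x -> exists i : 'I_n, (i != 0%N :> nat) && (0 < lovasz_coef x i).
Proof.
move=> ncx; apply/not_existsP => coef_le0; apply: ncx.
have eq_s0 (i : nat) : (i < n)%N -> (sorted_vals x)`_i = (sorted_vals x)`_0.
  elim: i => [//|i IHi] lt_in.
  have /negP := coef_le0 (Ordinal lt_in).
  rewrite /= -leNgt /lovasz_coef /= subr_le0 -(IHi (ltnW lt_in)) => le_next.
  by apply: le_anti; rewrite le_next sorted_vals_le.
exists (sorted_vals x)`_0 => j.
by have [i lt_in <-] := val_sorted_vals_nth x j; apply: eq_s0.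
Qed.

(* Only the value at [V] enters with a coefficient of arbitrary sign. *)
Lemma ler_lovasz_term h1 h2 x (i : 'I_n) :
  h1 [set: 'I_n] = h2 [set: 'I_n] ->
  (forall S, S != finset.set0 -> S != [set: 'I_n] -> h1 S <= h2 S) ->
  lovasz_coef x i * h1 (lovasz_level x i) <= lovasz_coef x i * h2 (lovasz_level x i).
Proof.
move=> h12V h12; have [i0|i_neq0] := eqVneq (i : nat) 0%N.
  by rewrite /lovasz_level i0 /= h12V.
have [->|coef_neq0] := eqVneq (lovasz_coef x i) 0; first by rewrite !mul0r.
have coef_gt0 : 0 < lovasz_coef x i by rewrite lt_def coef_neq0 lovasz_coef_ge0.
have [level_neq0 level_neqT] := lovasz_level_proper coef_gt0 i_neq0.
by apply: ler_wpM2l; [exact: ltW | exact: h12].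
Qed.

Lemma ler_lovasz h1 h2 x :
  h1 [set: 'I_n] = h2 [set: 'I_n] ->
  (forall S, S != finset.set0 -> S != [set: 'I_n] -> h1 S <= h2 S) ->
  lovasz h1 x <= lovasz h2 x.
Proof.
by move=> h12V h12; rewrite !lovaszE; apply: ler_sum => i _; apply: ler_lovasz_term.
Qed.

Lemma lovasz_gt0 h x :
  h [set: 'I_n] = 0 -> (forall S, S != finset.set0 -> S != [set: 'I_n] -> 0 < h S) ->
  nonconst x -> 0 < lovasz h x.
Proof.
move=> hV h_gt0 /exists_lovasz_coef_gt0[i /andP[i_neq0 coef_gt0]].
rewrite lovaszE (bigD1 i) //=; apply: ltr_pwDl.
  have [level_neq0 level_neqT] := lovasz_level_proper coef_gt0 i_neq0.
  by rewrite mulr_gt0 ?h_gt0.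
apply: sumr_ge0 => k _; rewrite -[leLHS](mulr0 (lovasz_coef x k)).
by apply: (@ler_lovasz_term (fun _ => 0)) => // S S0 ST; rewrite ltW ?h_gt0.
Qed.

Lemma sorted_vals_indic S : sorted_vals (indic R S) = nseq #|~: S| 0 ++ nseq #|S| 1.
Proof.
apply: (sorted_eq le_trans le_anti (sorted_vals_sorted _)).
  rewrite sorted_pairwise; last exact: le_trans.
  rewrite pairwise_cat; apply/and3P; split.
  - by apply/allrelP => _ _ /nseqP[-> _] /nseqP[-> _]; apply: ler01.
  - exact/pairwise_nseq/lexx.
  - exact/pairwise_nseq/lexx.
have enumC : perm_eq (enum 'I_n)
    ([seq j <- enum 'I_n | j \in ~: S] ++ [seq j <- enum 'I_n | j \in S]).
  rewrite perm_sym (eq_filter (a1 := mem S) (a2 := predC (mem (~: S)))) => [|j].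
    by apply/permPl/perm_filterC.
  by rewrite /= inE negbK.
rewrite perm_sort; apply: perm_trans (perm_map (indic R S) enumC) _.
rewrite map_cat !filter_enum_set (@map_enum_const _ _ _ _ 0) => [|j]; last first.
  by rewrite inE /indic => /negbTE ->.
by rewrite (@map_enum_const _ _ _ _ 1) // => j; rewrite /indic => ->.
Qed.

Lemma nth_sorted_vals_indic S (i : nat) : (i < n)%N ->
  (sorted_vals (indic R S))`_i = (#|~: S| <= i)%:R.
Proof.
move=> lt_in; have := cardsC S; rewrite card_ord => cardSn.
rewrite sorted_vals_indic nth_cat size_nseq !nth_nseq.
case: leqP => // le_i; case: ifP => // /negbT; lia.
Qed.

Lemma lovasz_coef_indic S (i : 'I_n) :
  lovasz_coef (indic R S) i = (i == #|~: S| :> nat)%:R.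
Proof.
have lt_in := ltn_ord i.
rewrite /lovasz_coef !nth_sorted_vals_indic ?(leq_ltn_trans (leq_pred i)) //.
case: eqVneq => [->|i_neq0]; first by rewrite subr0 leqn0 eq_sym.
have -> : (#|~: S| <= i.-1)%N = (#|~: S| < i)%N by lia.
by case: ltngtP; rewrite ?subrr ?subr0.
Qed.

Lemma lovasz_level_indic S (i : 'I_n) : S != finset.set0 -> i = #|~: S| :> nat ->
  lovasz_level (indic R S) i = S.
Proof.
move=> S_neq0 iE; rewrite /lovasz_level; case: eqVneq => [i0|i_neq0].
  have /cards0_eq CS0 : #|~: S| = 0%N by rewrite -iE i0.
  by rewrite -(finset.setCK S) CS0 finset.setC0.
rewrite nth_sorted_vals_indic; last by have := ltn_ord i; lia.
rewrite (_ : (_ <= _)%N = false); last by lia.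
by apply/setP => j; rewrite inE /indic; case: (j \in S); rewrite ?ltr01 ?ltxx.
Qed.

Lemma lovasz_indic h S : lovasz h (indic R S) = if S == finset.set0 then 0 else h S.
Proof.
rewrite lovaszE.
under eq_bigr => i _ do rewrite lovasz_coef_indic mulr_natl mulrb.
case: eqVneq => [S0|S_neq0].
  by apply: big1 => i _; rewrite S0 finset.setC0 cardsT card_ord (ltn_eqF (ltn_ord i)).
rewrite -big_mkcond.
under eq_bigr => i /eqP iE do rewrite lovasz_level_indic //.
rewrite (big_ord1_eq _ (fun=> h S)) ifT //.
have := cardsC S; rewrite card_ord => cardSn.
by move: S_neq0; rewrite -card_gt0; lia.
Qed.

Lemma nonconst_indic S : S != finset.set0 -> S != [set: 'I_n] -> nonconst (indic R S).
Proof.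
case/set0Pn=> j jS; rewrite -properT => /properP[_ [k _ kNS]] [t const_t].
move: (const_t j) (const_t k); rewrite /indic jS (negbTE kNS) => <- /eqP.
by rewrite eq_sym oner_eq0.
Qed.

End LovaszExtension.

Local Open Scope classical_set_scope.

Lemma inf_ratio_attained (R : realType) (T : Type) (D : set T) (F G : T -> R) r x0 :
  D x0 -> F x0 / G x0 = r -> (forall x, D x -> 0 < G x /\ r * G x <= F x) ->
  r = inf [set F x / G x | x in D].
Proof.
move=> Dx0 rE FG; have r_mem : [set F x / G x | x in D] r by exists x0.
have r_lb : lbound [set F x / G x | x in D] r.
  by move=> _ [x Dx <-]; have [G_gt0 rGF] := FG x Dx; rewrite ler_pdivlMr.
apply: le_anti; rewrite lb_le_inf //=; last by exists r.
by apply: ge_inf => //; exists r.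
Qed.

Theorem theorem2p7 (R : realType) (n : nat)
    (f1 f2 g : {set 'I_n} -> R)
    (hf1 : forall S, 0 <= f1 S) (hf2 : forall S, 0 <= f2 S)
    (hg : forall S, 0 <= g S)
    (hg0 : g finset.set0 = 0) (hgV : g [set: 'I_n]%SET = 0)
    (hgpos : forall S, S != finset.set0 -> S != [set: 'I_n]%SET -> 0 < g S) :
  let f := fun S => Num.min (f1 S) (f2 S) in
  let FL := lovasz f in
  let FtL := fun x => Num.min (lovasz f1 x) (lovasz f2 x) in
  let GL := lovasz g in
  (forall S : {set 'I_n}, FL (indic R S) = FtL (indic R S)) /\
  (f1 [set: 'I_n]%SET = 0 -> f2 [set: 'I_n]%SET = 0 -> (1 < n)%N ->
   exists S : {set 'I_n},
     [/\ S != finset.set0, S != [set: 'I_n]%SET,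
      (forall T : {set 'I_n}, T != finset.set0 -> T != [set: 'I_n]%SET ->
         f S / g S <= f T / g T),
      f S / g S = inf [set FL x / GL x | x in [set x | nonconst x]] &
      f S / g S = inf [set FtL x / GL x | x in [set x | nonconst x]]]).
Proof.
move=> f FL FtL GL; split=> [S|f1V f2V n_gt1].
  by rewrite /FL /FtL !lovasz_indic; case: ifP; rewrite ?minxx.
have fV : f [set: 'I_n]%SET = 0 by rewrite /f f1V f2V minxx.
pose proper S := (S != finset.set0) && (S != [set: 'I_n]%SET).
have proper1 : proper [set Ordinal n_gt1]%SET.
  rewrite /proper -card_gt0 cards1 /=; apply/negP => /eqP.
  move/(congr1 (fun A : {set 'I_n} => #|A|)).
  by rewrite cards1 cardsT card_ord; lia.
have [S /andP[S_neq0 S_neqT] S_min] := arg_minP (fun S => f S / g S) proper1.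
set r := f S / g S.
have rGF x : r * GL x <= FL x.
  rewrite -lovaszZ; apply: ler_lovasz => [|T T0 TT]; first by rewrite hgV fV mulr0.
  by rewrite -ler_pdivlMr ?hgpos ?S_min //; apply/andP.
have FFt x : FL x <= FtL x.
  by rewrite le_min !ler_lovasz ?fV ?f1V ?f2V // => T _ _; rewrite ge_min lexx ?orbT.
have GL_gt0 x : nonconst x -> 0 < GL x by apply: lovasz_gt0.
have [FLS FtLS GLS] :
    [/\ FL (indic R S) = f S, FtL (indic R S) = f S & GL (indic R S) = g S].
  by rewrite /FL /FtL /GL !lovasz_indic (negbTE S_neq0).
have ncS := nonconst_indic (R := R) S_neq0 S_neqT.
exists S; split=> //.
- by move=> T T0 TT; apply: S_min; apply/andP.
- apply: (inf_ratio_attained ncS) => [|x /GL_gt0 GLx]; first by rewrite FLS GLS.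
  by split=> //; apply: rGF.
- apply: (inf_ratio_attained ncS) => [|x /GL_gt0 GLx]; first by rewrite FtLS GLS.
  by split=> //; apply: le_trans (FFt x).
Qed.
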